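(* Let $m,r,s,t$ be any integers and $n\ge0$ an integer, and set \[ X=q^mu_{r-s}^2+q^{2m-s}u_{r-m}^2+q^mu_{r-s}u_{r-m}v_{m-s}, \] assumed nonzero. Then \[ \begin{aligned} &\sum_{j=0}^{n}(-1)^jq^{(m-s)j}u_{r-s}^{n-j}u_{r-m}^{j}w_{(s-m)j+mn+t}\\ &=\sum_{j=0}^{n}\frac{u_{m-s}^j}{2^{j+1}}\left(u_{r-s}^{n-j}w_{(r-m)j+mn+t}+(-1)^{n-j}q^{(m-s)(n-j)}u_{r-m}^{n-j}w_{s(n-j)+t+rj}\right)\\ &=\frac{u_{r-s}^{n+2}w_{mn+t}+u_{r-s}^{n+1}u_{r-m}w_{mn+m+t-s}}{u_{r-s}^2+q^{m-s}u_{r-m}^2+u_{r-s}u_{r-m}v_{m-s}} +\frac{(-1)^nu_{r-m}^{n+1}\left(q^{(m-s)(n+1)+m}u_{r-s}w_{sn+s+t-m}+q^{(m-s)(n+2)+s}u_{r-m}w_{sn+t}\right)}{X}. \end{aligned} \]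
   Context: Let $p,q$ be real numbers with $p\neq0$, $q\neq0$ and $p^2-4q>0$; let $a,b$ be complex numbers. Put $\Delta=\sqrt{p^2-4q}>0$, $\tau=(p+\Delta)/2$, $\sigma=(p-\Delta)/2$. The Horadam sequence $w_n=w_n(a,b;p,q)$ is defined by $w_0=a$, $w_1=b$, $w_n=pw_{n-1}-qw_{n-2}$, extended to all integers $n$ via $w_{n-2}=(pw_{n-1}-w_n)/q$; equivalently $w_n=A\tau^n+B\sigma^n$ with $A=(b-a\sigma)/\Delta$, $B=(a\tau-b)/\Delta$. Write $u_n=w_n(0,1;p,q)=(\tau^n-\sigma^n)/\Delta$ and $v_n=w_n(2,p;p,q)=\tau^n+\sigma^n$. *)

From mathcomp Require Import all_boot all_algebra.
From mathcomp Require Import complex.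
From mathcomp Require Export Rstruct.
Set Implicit Arguments. Unset Strict Implicit. Unset Printing Implicit Defensive.
Import GRing.Theory Num.Theory.
Local Open Scope complex_scope.
Local Open Scope ring_scope.

Notation Rl := Rdefinitions.R.
Notation Cx := (complex Rdefinitions.R).

(* Forward recursion: hfwd k = (w_k, w_{k+1}). *)
Fixpoint hfwd (a b p q : Cx) (k : nat) : Cx * Cx :=
  match k with
  | 0%N => (a, b)
  | k'.+1 => let xy := hfwd a b p q k' in (xy.2, p * xy.2 - q * xy.1)
  end.

(* Backward recursion: hbwd k = (w_{-k}, w_{-k+1}),
   using w_{n-2} = (p w_{n-1} - w_n) / q. *)
Fixpoint hbwd (a b p q : Cx) (k : nat) : Cx * Cx :=
  match k with
  | 0%N => (a, b)
  | k'.+1 => let xy := hbwd a b p q k' in ((p * xy.1 - xy.2) / q, xy.1)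
  end.

Definition horadam (a b : Cx) (p q : Rl) (n : int) : Cx :=
  match n with
  | Posz k => (hfwd a b p%:C q%:C k).1
  | Negz k => (hbwd a b p%:C q%:C k.+1).1
  end.

Definition hu (p q : Rl) (n : int) : Cx := horadam 0 1 p q n.
Definition hv (p q : Rl) (n : int) : Cx := horadam 2 p%:C p q n.

From mathcomp Require Import all_boot all_order all_algebra.
From mathcomp Require Import complex.
From mathcomp Require Import ring.
Import Order.TTheory GRing.Theory Num.Theory.
Local Open Scope complex_scope.
Local Open Scope ring_scope.
Set Implicit Arguments. Unset Strict Implicit. Unset Printing Implicit Defensive.

(* By the Binet formula w_k = A tau^k + B sigma^k every expression is linear
   in w, so it suffices to treat w_k = tau^k (the case sigma^k is symmetric).
   Writing x = u_{r-s} and y = -sigma^{m-s} u_{r-m}, all three expressions then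
   equal tau^{mn+t} (x^n + x^{n-1} y + ... + y^n): the first by expanding the
   powers of q = tau sigma, the second because x + y = tau^{r-m} u_{m-s} and
   the homogeneous sum expands around the midpoint (x + y)/2, the third because
   the denominators factor as (x + tau^{m-s} u_{r-m}) (x - y), up to q^m, and
   the sum equals (x^{n+1} - y^{n+1}) / (x - y). *)

Section GeometricSum.
Variable F : fieldType.
Implicit Types x y : F.

Definition geosum x y n := \sum_(0 <= j < n.+1) x ^+ (n - j) * y ^+ j.

Lemma geosumSl x y n : geosum x y n.+1 = x * geosum x y n + y ^+ n.+1.
Proof.
rewrite /geosum big_nat_recr //= subnn mul1r mulr_sumr; congr (_ + _).
by apply: eq_big_nat => j /andP[_ lt_jn]; rewrite subSn // exprS mulrA.
Qed.

Lemma geosumSr x y n : geosum x y n.+1 = x ^+ n.+1 + y * geosum x y n.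
Proof.
rewrite /geosum big_nat_recl //= subn0 mulr1 mulr_sumr; congr (_ + _).
by apply: eq_big_nat => j _; rewrite subSS exprS mulrCA.
Qed.

Lemma geosum_eq_div x y n : x - y != 0 ->
  geosum x y n = (x ^+ n.+1 - y ^+ n.+1) / (x - y).
Proof.
move=> xy_neq0; apply: (canRL (mulfK xy_neq0)).
have := geosumSl x y n; rewrite geosumSr => /(canRL (addrK _)) ->; ring.
Qed.

(* Averaging geosumSl and geosumSr gives the recursion
   [geosum x y n.+1 = (x + y) / 2 * geosum x y n + (x ^+ n.+1 + y ^+ n.+1) / 2]. *)
Lemma geosum_midpoint x y n : (2 : F) != 0 ->
  geosum x y n
  = \sum_(0 <= j < n.+1) ((x + y) / 2) ^+ j / 2 * (x ^+ (n - j) + y ^+ (n - j)).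
Proof.
move=> two_neq0; elim: n => [|n IHn]; first by rewrite /geosum !big_nat1 !expr0; field.
have -> : geosum x y n.+1 = (x + y) / 2 * geosum x y n + (x ^+ n.+1 + y ^+ n.+1) / 2.
  transitivity ((geosum x y n.+1 + geosum x y n.+1) / 2); first by field.
  by rewrite {1}geosumSl geosumSr; field.
rewrite IHn [RHS]big_nat_recl // subn0 expr0 mulr_sumr addrC; congr (_ + _); first by field.
by apply: eq_big_nat => j _; rewrite subSS exprS; ring.
Qed.

End GeometricSum.

Lemma exprz_mulzn (R : unitRingType) (z : R) (k : int) (j : nat) :
  z ^ (k * j%:Z) = (z ^ k) ^+ j.
Proof. by rewrite exprnP exprz_exp. Qed.

Section GeometricCase.
Variables (F : fieldType) (tau sigma Q : F) (u v : int -> F).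
Hypotheses (tau_neq0 : tau != 0) (sigma_neq0 : sigma != 0) (tau_neq_sigma : tau != sigma).
Hypothesis u_binet : forall k, u k = (tau ^ k - sigma ^ k) / (tau - sigma).
Hypothesis v_binet : forall k, v k = tau ^ k + sigma ^ k.
Hypothesis Q_def : Q = tau * sigma.
Variables (m r s t : int) (n : nat).

Let X := Q ^ m * u (r - s) ^+ 2 + Q ^ (2 * m - s) * u (r - m) ^+ 2
         + Q ^ m * u (r - s) * u (r - m) * v (m - s).

Definition alt_sum (w : int -> F) :=
  \sum_(0 <= j < n.+1)
      (-1) ^+ j * Q ^ ((m - s) * j%:Z) * u (r - s) ^+ (n - j) * u (r - m) ^+ j
        * w ((s - m) * j%:Z + m * n%:Z + t).

Definition mid_sum (w : int -> F) :=
  \sum_(0 <= j < n.+1)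
      u (m - s) ^+ j / 2 ^+ j.+1 *
        (u (r - s) ^+ (n - j) * w ((r - m) * j%:Z + m * n%:Z + t)
         + (-1) ^+ (n - j) * Q ^ ((m - s) * (n - j)%:Z) * u (r - m) ^+ (n - j)
             * w (s * (n - j)%:Z + t + r * j%:Z)).

Definition closed_form (w : int -> F) :=
  (u (r - s) ^+ n.+2 * w (m * n%:Z + t)
        + u (r - s) ^+ n.+1 * u (r - m) * w (m * n%:Z + m + t - s))
       / (u (r - s) ^+ 2 + Q ^ (m - s) * u (r - m) ^+ 2
          + u (r - s) * u (r - m) * v (m - s))
     + (-1) ^+ n * u (r - m) ^+ n.+1
         * (Q ^ ((m - s) * (n%:Z + 1) + m) * u (r - s) * w (s * n%:Z + s + t - m)
            + Q ^ ((m - s) * (n%:Z + 2) + s) * u (r - m) * w (s * n%:Z + t))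
         / X.

Lemma alt_sum_lincomb A B w : (forall k, w k = A * tau ^ k + B * sigma ^ k) ->
  alt_sum w = A * alt_sum (fun k => tau ^ k) + B * alt_sum (fun k => sigma ^ k).
Proof.
move=> w_lin; rewrite /alt_sum !mulr_sumr -big_split.
by apply: eq_bigr => j _ /=; rewrite w_lin; ring.
Qed.

Lemma mid_sum_lincomb A B w : (forall k, w k = A * tau ^ k + B * sigma ^ k) ->
  mid_sum w = A * mid_sum (fun k => tau ^ k) + B * mid_sum (fun k => sigma ^ k).
Proof.
move=> w_lin; rewrite /mid_sum !mulr_sumr -big_split.
by apply: eq_bigr => j _ /=; rewrite !w_lin; ring.
Qed.

Lemma closed_form_lincomb A B w : (forall k, w k = A * tau ^ k + B * sigma ^ k) ->
  closed_form w = A * closed_form (fun k => tau ^ k) + B * closed_form (fun k => sigma ^ k).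
Proof. by move=> w_lin; rewrite /closed_form !w_lin; ring. Qed.

Lemma u_addz a b : u (a + b) = tau ^ a * u b + sigma ^ b * u a.
Proof. by rewrite !u_binet !expfzDr //; field; rewrite subr_eq0. Qed.

Lemma alt_sum_geometric :
  alt_sum (fun k => tau ^ k)
  = tau ^ (m * n%:Z + t) * geosum (u (r - s)) (- (sigma ^ (m - s) * u (r - m))) n.
Proof.
rewrite /alt_sum /geosum mulr_sumr; apply: eq_big_nat => j _.
rewrite Q_def expfzMl !(mulrBl, expfzDr, exprz_mulzn, expfzMl) // -!invr_expz.
rewrite [in RHS]exprNn !exprMn !exprVn.
by field; rewrite !expf_neq0 ?expfz_neq0.
Qed.

Lemma mid_sum_geometric : (2 : F) != 0 ->
  mid_sum (fun k => tau ^ k)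
  = tau ^ (m * n%:Z + t) * geosum (u (r - s)) (- (sigma ^ (m - s) * u (r - m))) n.
Proof.
move=> two_neq0.
have sum_xy : u (r - s) + - (sigma ^ (m - s) * u (r - m)) = tau ^ (r - m) * u (m - s).
  have -> : r - s = (r - m) + (m - s) by ring.
  by rewrite u_addz addrK.
rewrite geosum_midpoint // sum_xy /mid_sum mulr_sumr.
apply: eq_big_nat => j /andP[_]; rewrite ltnS => le_jn.
move: (n - j)%N (subnK le_jn) => k <-.
rewrite PoszD (mulrDr m) Q_def expfzMl.
rewrite !(mulrBl, expfzDr, exprz_mulzn, expfzMl) // -!invr_expz.
rewrite [in RHS]exprNn !exprMn !exprVn exprS.
by field; rewrite ?two_neq0 !expf_neq0 ?expfz_neq0.
Qed.

Lemma closed_form_geometric : X != 0 ->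
  closed_form (fun k => tau ^ k)
  = tau ^ (m * n%:Z + t) * geosum (u (r - s)) (- (sigma ^ (m - s) * u (r - m))) n.
Proof.
rewrite /closed_form /X; set x := u (r - s); set V := u (r - m).
have Q_expz k : Q ^ k = tau ^ k * sigma ^ k by rewrite Q_def expfzMl.
have D_factor : x ^+ 2 + Q ^ (m - s) * V ^+ 2 + x * V * v (m - s)
    = (x + tau ^ (m - s) * V) * (x + sigma ^ (m - s) * V).
  by rewrite Q_expz v_binet; ring.
have X_factor : Q ^ m * x ^+ 2 + Q ^ (2 * m - s) * V ^+ 2 + Q ^ m * x * V * v (m - s)
    = Q ^ m * (x ^+ 2 + Q ^ (m - s) * V ^+ 2 + x * V * v (m - s)).
  have -> : 2 * m - s = m + (m - s) by ring.
  by rewrite expfzDr ?Q_def ?mulf_neq0 //; ring.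
rewrite X_factor D_factor => X_neq0.
move: (X_neq0); rewrite !mulf_eq0 !negb_or => /and3P[_ xa_neq0 xb_neq0].
rewrite geosum_eq_div ?opprK //.
move: xa_neq0 xb_neq0; rewrite !Q_expz.
(* Substituting m = d + s keeps tau ^ (m - s) atomic, so the factored
   denominators survive the splitting of the exponents. *)
move: (m - s) (subrK s m) => d <-.
rewrite !(@mulrDl int, @mulrDr int, @mulrBl int, @opprD int, @mulr1 int).
rewrite !(expfzDr, exprz_mulzn) // -!invr_expz => xa_neq0 xb_neq0.
rewrite [in RHS]exprNn !exprMn ?exprVn ?exprD !exprS.
rewrite /x /V; field.
by rewrite -/x -/V xa_neq0 xb_neq0 !expfz_neq0.
Qed.

End GeometricCase.

Section BinetForm.
Variables (F : fieldType) (tau sigma Q A B : F) (u v w : int -> F).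
Hypotheses (two_neq0 : (2 : F) != 0) (tau_neq0 : tau != 0) (sigma_neq0 : sigma != 0).
Hypothesis tau_neq_sigma : tau != sigma.
Hypothesis u_binet : forall k, u k = (tau ^ k - sigma ^ k) / (tau - sigma).
Hypothesis v_binet : forall k, v k = tau ^ k + sigma ^ k.
Hypothesis Q_def : Q = tau * sigma.
Hypothesis w_binet : forall k, w k = A * tau ^ k + B * sigma ^ k.
Variables (m r s t : int) (n : nat).

Let X := Q ^ m * u (r - s) ^+ 2 + Q ^ (2 * m - s) * u (r - m) ^+ 2
         + Q ^ m * u (r - s) * u (r - m) * v (m - s).

Lemma horadam_sum_identities : X != 0 ->
  alt_sum Q u m r s t n w = mid_sum Q u m r s t n w
  /\ mid_sum Q u m r s t n w = closed_form Q u v m r s t n w.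
Proof.
move=> X_neq0.
have sigma_neq_tau : sigma != tau by rewrite eq_sym.
have u_binet' k : u k = (sigma ^ k - tau ^ k) / (sigma - tau).
  by rewrite u_binet -[sigma ^ k - _]opprB -[sigma - tau]opprB invrN mulrNN.
have v_binet' k : v k = sigma ^ k + tau ^ k by rewrite addrC.
have Q_def' : Q = sigma * tau by rewrite mulrC.
rewrite (alt_sum_lincomb Q u m r s t n w_binet) (mid_sum_lincomb Q u m r s t n w_binet).
rewrite (closed_form_lincomb Q u v m r s t n w_binet).
rewrite (alt_sum_geometric _ tau_neq0 sigma_neq0 Q_def) (alt_sum_geometric _ sigma_neq0 tau_neq0 Q_def').
rewrite (mid_sum_geometric tau_neq0 sigma_neq0 tau_neq_sigma u_binet Q_def) //.
rewrite (mid_sum_geometric sigma_neq0 tau_neq0 sigma_neq_tau u_binet' Q_def') //.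
rewrite (closed_form_geometric tau_neq0 sigma_neq0 v_binet Q_def) //.
by rewrite (closed_form_geometric sigma_neq0 tau_neq0 v_binet' Q_def').
Qed.

End BinetForm.

Lemma horadam_roots (p q : Rl) : q != 0 -> 0 < p ^+ 2 - 4 * q ->
  exists tau sigma : Cx, [/\ tau != 0, sigma != 0, tau != sigma, tau + sigma = p%:C & tau * sigma = q%:C].
Proof.
move=> q_neq0 disc_gt0; set d := Num.sqrt (p ^+ 2 - 4 * q).
have d_gt0 : 0 < d by rewrite sqrtr_gt0.
have d_sq : d ^+ 2 = p ^+ 2 - 4 * q by rewrite sqr_sqrtr // ltW.
have sum_roots : ((p + d) / 2)%:C + ((p - d) / 2)%:C = p%:C :> Cx.
  by rewrite -rmorphD /=; congr (_ %:C); field.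
have prod_roots : ((p + d) / 2)%:C * ((p - d) / 2)%:C = q%:C :> Cx.
  rewrite -rmorphM /=; congr (_ %:C).
  have -> : (p + d) / 2 * ((p - d) / 2) = (p ^+ 2 - d ^+ 2) / 4 by field.
  by rewrite d_sq; field.
exists ((p + d) / 2)%:C, ((p - d) / 2)%:C; split => //.
- by apply: contra_neq q_neq0 => tau0; apply: complexI; rewrite -prod_roots tau0 mul0r.
- by apply: contra_neq q_neq0 => sigma0; apply: complexI; rewrite -prod_roots sigma0 mulr0.
- apply: contra_neq (lt0r_neq0 d_gt0) => /complexI eq_roots.
  have -> : d = (p + d) / 2 - (p - d) / 2 by field.
  by rewrite eq_roots subrr.
Qed.

Section HoradamBinet.
Variables (a b P Qc tau sigma : Cx).
Hypotheses (sum_roots : tau + sigma = P) (prod_roots : tau * sigma = Qc) (tau_neq_sigma : tau != sigma).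
Let A := (b - a * sigma) / (tau - sigma).
Let B := (a * tau - b) / (tau - sigma).

Lemma hfwd_binet k :
  hfwd a b P Qc k = (A * tau ^+ k + B * sigma ^+ k, A * tau ^+ k.+1 + B * sigma ^+ k.+1).
Proof.
have tau_sigma : tau - sigma != 0 by rewrite subr_eq0.
elim: k => [|k IHk] /=; first by rewrite /A /B; congr (_, _); field.
by rewrite IHk /= /A /B -sum_roots -prod_roots !exprS; congr (_, _); field.
Qed.

Lemma hbwd_binet k : tau != 0 -> sigma != 0 ->
  hbwd a b P Qc k = (A * tau^-1 ^+ k + B * sigma^-1 ^+ k, A * tau^-1 ^+ k * tau + B * sigma^-1 ^+ k * sigma).
Proof.
move=> tau_neq0 sigma_neq0; have tau_sigma : tau - sigma != 0 by rewrite subr_eq0.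
elim: k => [|k IHk] /=; first by rewrite /A /B !expr0; congr (_, _); field.
rewrite IHk /= /A /B -sum_roots -prod_roots !exprS.
by congr (_, _); field; rewrite tau_neq0 sigma_neq0 tau_sigma.
Qed.

End HoradamBinet.

Lemma horadam_binet (a b : Cx) (p q : Rl) (tau sigma : Cx) k :
  tau + sigma = p%:C -> tau * sigma = q%:C -> tau != sigma -> tau != 0 -> sigma != 0 ->
  horadam a b p q k = (b - a * sigma) / (tau - sigma) * tau ^ k + (a * tau - b) / (tau - sigma) * sigma ^ k.
Proof.
move=> sum_roots prod_roots tau_neq_sigma tau_neq0 sigma_neq0; case: k => k.
  by rewrite /horadam (hfwd_binet _ _ sum_roots prod_roots) //= -!exprnP.
by rewrite /horadam (hbwd_binet _ _ sum_roots prod_roots) //= !exprVn.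
Qed.

Theorem theorem14 (p q : Rl) (a b : Cx) (m r s t : int) (n : nat) :
  p != 0 -> q != 0 -> 0 < p ^+ 2 - 4 * q ->
  let w := horadam a b p q in
  let u := hu p q in
  let v := hv p q in
  let Q : Cx := q%:C in
  let X := Q ^ m * u (r - s) ^+ 2 + Q ^ (2 * m - s) * u (r - m) ^+ 2
           + Q ^ m * u (r - s) * u (r - m) * v (m - s) in
  X != 0 ->
  (\sum_(0 <= j < n.+1)
      (-1) ^+ j * Q ^ ((m - s) * j%:Z) * u (r - s) ^+ (n - j) * u (r - m) ^+ j
        * w ((s - m) * j%:Z + m * n%:Z + t)
   = \sum_(0 <= j < n.+1)
      u (m - s) ^+ j / 2 ^+ j.+1 *
        (u (r - s) ^+ (n - j) * w ((r - m) * j%:Z + m * n%:Z + t)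
         + (-1) ^+ (n - j) * Q ^ ((m - s) * (n - j)%:Z) * u (r - m) ^+ (n - j)
             * w (s * (n - j)%:Z + t + r * j%:Z)))
  /\
  (\sum_(0 <= j < n.+1)
      u (m - s) ^+ j / 2 ^+ j.+1 *
        (u (r - s) ^+ (n - j) * w ((r - m) * j%:Z + m * n%:Z + t)
         + (-1) ^+ (n - j) * Q ^ ((m - s) * (n - j)%:Z) * u (r - m) ^+ (n - j)
             * w (s * (n - j)%:Z + t + r * j%:Z))
   = (u (r - s) ^+ n.+2 * w (m * n%:Z + t)
        + u (r - s) ^+ n.+1 * u (r - m) * w (m * n%:Z + m + t - s))
       / (u (r - s) ^+ 2 + Q ^ (m - s) * u (r - m) ^+ 2
          + u (r - s) * u (r - m) * v (m - s))
     + (-1) ^+ n * u (r - m) ^+ n.+1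
         * (Q ^ ((m - s) * (n%:Z + 1) + m) * u (r - s) * w (s * n%:Z + s + t - m)
            + Q ^ ((m - s) * (n%:Z + 2) + s) * u (r - m) * w (s * n%:Z + t))
         / X).
Proof.
move=> _ q_neq0 disc_gt0 w u v Q X X_neq0.
have [tau [sigma [tau_neq0 sigma_neq0 tau_neq_sigma sum_roots prod_roots]]] := horadam_roots q_neq0 disc_gt0.
have binet c0 c1 k : horadam c0 c1 p q k
    = (c1 - c0 * sigma) / (tau - sigma) * tau ^ k + (c0 * tau - c1) / (tau - sigma) * sigma ^ k.
  exact: horadam_binet.
have tau_sigma : tau - sigma != 0 by rewrite subr_eq0.
have u_binet k : u k = (tau ^ k - sigma ^ k) / (tau - sigma) by rewrite /u /hu binet; field.
have v_binet k : v k = tau ^ k + sigma ^ k by rewrite /v /hv binet -sum_roots; field.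
have Q_def : Q = tau * sigma by rewrite prod_roots.
have two_neq0 : (2 : Cx) != 0 by rewrite pnatr_eq0.
exact: (horadam_sum_identities two_neq0 tau_neq0 sigma_neq0 tau_neq_sigma u_binet v_binet Q_def (binet a b)).
Qed.
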